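(* Let $x,y\in\mathbb{H}^2$ and $d=d\big(\tfrac{x+y}{2},\partial\mathbb{H}^2\big)$. Then $$\tilde\tau_{\mathbb{H}^2}(x,y)\ge\begin{cases}\log\Big(1+\sqrt{\frac{|x-y|}{d}}\Big), & |x-y|>2d,\\[1mm] \log\Big(1+\frac{2|x-y|}{\sqrt{4d^2+|x-y|^2}}\Big), & |x-y|\le 2d,\end{cases}$$ and, if $|x-y|<2d$, $$\tilde\tau_{\mathbb{H}^2}(x,y)\le\log\Big(1+\frac{2|x-y|}{\sqrt{4d^2-|x-y|^2}}\Big).$$
   Context: $\mathbb{H}^2=\{(x_1,x_2)\in\mathbb{R}^2:x_2>0\}$, $\partial\mathbb{H}^2$ is the real axis, $d(z,\partial\mathbb{H}^2)$ is Euclidean distance. For a proper subdomain $D\subsetneq\mathbb{R}^n$ and $x,y\in D$, $\tilde\tau_D(x,y)=\log\big(1+\sup_{p\in\partial D}\frac{|x-y|}{\sqrt{|x-p||y-p|}}\big)$ (the scale invariant Cassinian metric). *)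

From Stdlib Require Import Reals Lra Classical ClassicalEpsilon.
Open Scope R_scope.

Definition pt := (R * R)%type.
Definition dist2 (x y : pt) : R :=
  sqrt ((fst x - fst y)^2 + (snd x - snd y)^2).

Definition inH2 (x : pt) : Prop := 0 < snd x.
Definition in_bdH2 (p : pt) : Prop := snd p = 0.

(* Supremum of a set of reals (least upper bound when it exists;
   junk value 0 otherwise — it always exists in our use). *)
Definition Rsup (E : R -> Prop) : R :=
  match excluded_middle_informative (exists l, is_lub E l) with
  | left h => proj1_sig (constructive_indefinite_description _ h)
  | right _ => 0
  end.

Definition tau_tilde (bd : pt -> Prop) (x y : pt) : R :=
  ln (1 + Rsup (fun r => exists p, bd p /\
         r = dist2 x y / sqrt (dist2 x p * dist2 y p))).

Definition tau_H2 (x y : pt) : R := tau_tilde in_bdH2 x y.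

Definition midpt (x y : pt) : pt := ((fst x + fst y)/2, (snd x + snd y)/2).
Definition d_bdH2 (z : pt) : R := Rabs (snd z).

From Stdlib Require Import Reals Lra Psatz ClassicalEpsilon.
Open Scope R_scope.

(* Centre the picture at the midpoint: for the boundary point p = (m - s, 0),
   where (m, d) is the midpoint of x and y and t = |x - y|,
     (|x - p| |y - p|)^2 = (s^2 + d^2 - t^2/4)^2 + ((x1 - y1) d - (x2 - y2) s)^2.
   The choice s = 0 gives the lower bound claimed for t <= 2d (it in fact holds
   for every t); when t > 2d the first square vanishes for s^2 = t^2/4 - d^2,
   and choosing the sign of s well makes the second square at most (d t)^2.  When t < 2d every product is at least
   (d^2 - t^2/4)^2, which is the upper bound. *)

Lemma ln_le_compat a b : 0 < a -> a <= b -> ln a <= ln b.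
Proof.
  intros Ha Hab. destruct (Rle_lt_or_eq_dec _ _ Hab) as [Hlt | ->].
  - left. apply ln_increasing; assumption.
  - apply Rle_refl.
Qed.

Lemma pow2_le_reg a b : 0 <= b -> a ^ 2 <= b ^ 2 -> a <= b.
Proof. intros Hb Hab. nra. Qed.

Lemma Rdiv_sqrt_le_compat t a b : 0 <= t -> 0 < a -> a <= b -> t / sqrt b <= t / sqrt a.
Proof.
  intros Ht Ha Hab. unfold Rdiv. apply Rmult_le_compat_l; [assumption |].
  apply Rinv_le_contravar; [apply sqrt_lt_R0; assumption | apply sqrt_le_1_alt; assumption].
Qed.

Lemma sqrt_div_as_ratio t d : 0 < t -> 0 < d -> sqrt (t / d) = t / sqrt (d * t).
Proof.
  intros Ht Hd. rewrite sqrt_div_alt, sqrt_mult by lra.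
  rewrite <- (sqrt_sqrt t) at 2 by lra.
  field. split; apply Rgt_not_eq, sqrt_lt_R0; assumption.
Qed.

Lemma double_div_sqrt t e : 0 < e -> 2 * t / sqrt e = t / sqrt (e / 4).
Proof.
  intros He. rewrite sqrt_div_alt by lra.
  replace 4 with (2 ^ 2) by ring. rewrite sqrt_pow2 by lra.
  field. apply Rgt_not_eq, sqrt_lt_R0; assumption.
Qed.

Lemma Rsup_is_lub (E : R -> Prop) :
  (exists r, E r) -> (exists B, forall r, E r -> r <= B) -> is_lub E (Rsup E).
Proof.
  intros Hne [B HB]. unfold Rsup.
  destruct (excluded_middle_informative _) as [Hlub | Hno].
  - exact (proj2_sig (constructive_indefinite_description _ Hlub)).
  - exfalso. apply Hno. destruct (completeness E) as [l Hl]; [exists B; exact HB | exact Hne |].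
    exists l. exact Hl.
Qed.

Lemma dist2_sq (x y : pt) : dist2 x y ^ 2 = (fst x - fst y) ^ 2 + (snd x - snd y) ^ 2.
Proof.
  apply pow2_sqrt. apply Rplus_le_le_0_compat; apply pow2_ge_0.
Qed.

Lemma snd_le_dist2_bdH2 (x p : pt) : inH2 x -> in_bdH2 p -> snd x <= dist2 x p.
Proof.
  intros Hx Hp. apply pow2_le_reg; [apply sqrt_pos |].
  rewrite dist2_sq, Hp, Rminus_0_r. pose proof (pow2_ge_0 (fst x - fst p)). lra.
Qed.

Lemma dist2_bdH2_prod_sq (x y : pt) (s : R) :
  let m := midpt x y in
  (dist2 x (fst m - s, 0) * dist2 y (fst m - s, 0)) ^ 2 =
  (s ^ 2 + snd m ^ 2 - dist2 x y ^ 2 / 4) ^ 2 +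
  ((fst x - fst y) * snd m - (snd x - snd y) * s) ^ 2.
Proof.
  intros m. rewrite Rpow_mult_distr, !dist2_sq.
  unfold m, midpt; simpl. field.
Qed.

Lemma prod_sq_le_at_centre a b d t :
  a ^ 2 + b ^ 2 = t ^ 2 ->
  (0 ^ 2 + d ^ 2 - t ^ 2 / 4) ^ 2 + (a * d - b * 0) ^ 2 <= ((4 * d ^ 2 + t ^ 2) / 4) ^ 2.
Proof. intros Hab. nra. Qed.

Lemma prod_sq_ge_near a b d t s :
  t ^ 2 / 4 <= d ^ 2 ->
  ((4 * d ^ 2 - t ^ 2) / 4) ^ 2 <= (s ^ 2 + d ^ 2 - t ^ 2 / 4) ^ 2 + (a * d - b * s) ^ 2.
Proof.
  intros Hd. pose proof (pow2_ge_0 s). pose proof (pow2_ge_0 (a * d - b * s)). nra.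
Qed.

Lemma sub_sq_le_of_same_sign A B M : 0 <= A * B -> A ^ 2 <= M -> B ^ 2 <= M -> (A - B) ^ 2 <= M.
Proof. intros HAB HA HB. nra. Qed.

Lemma prod_sq_le_far a b d t :
  0 <= d -> a ^ 2 + b ^ 2 = t ^ 2 -> b ^ 2 <= 4 * d ^ 2 -> d ^ 2 < t ^ 2 / 4 ->
  exists s, (s ^ 2 + d ^ 2 - t ^ 2 / 4) ^ 2 + (a * d - b * s) ^ 2 <= (d * t) ^ 2.
Proof.
  intros Hd Hab Hb Hfar.
  set (r := sqrt (t ^ 2 / 4 - d ^ 2)).
  assert (Hr2 : r ^ 2 = t ^ 2 / 4 - d ^ 2) by (apply pow2_sqrt; lra).
  assert (Hr : 0 <= r) by apply sqrt_pos.
  assert (Hsign : exists s, s ^ 2 = r ^ 2 /\ 0 <= (a * d) * (b * s)).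
  { destruct (Rle_dec 0 (a * b)).
    - exists r. split; [reflexivity |].
      replace (a * d * (b * r)) with (a * b * d * r) by ring.
      apply Rmult_le_pos; [apply Rmult_le_pos |]; assumption.
    - exists (- r). split; [ring |].
      replace (a * d * (b * - r)) with (- (a * b) * d * r) by ring.
      apply Rmult_le_pos; [apply Rmult_le_pos |]; lra. }
  destruct Hsign as [s [Hs2 Hs]]. exists s.
  rewrite Hs2, Hr2.
  replace ((t ^ 2 / 4 - d ^ 2 + d ^ 2 - t ^ 2 / 4) ^ 2) with 0 by ring.
  rewrite Rplus_0_l. apply sub_sq_le_of_same_sign; [assumption | nra |].
  rewrite Rpow_mult_distr, Hs2, Hr2. nra.
Qed.

Definition cassinian_ratio (x y p : pt) : R := dist2 x y / sqrt (dist2 x p * dist2 y p).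

Definition cassinian_set (x y : pt) (r : R) : Prop :=
  exists p, in_bdH2 p /\ r = cassinian_ratio x y p.

Section Cassinian_H2.

Variables x y : pt.
Hypothesis hx : inH2 x.
Hypothesis hy : inH2 y.

Lemma dist2_prod_bdH2_ge p : in_bdH2 p -> snd x * snd y <= dist2 x p * dist2 y p.
Proof.
  intros Hp. apply Rmult_le_compat; try (left; assumption);
    apply snd_le_dist2_bdH2; assumption.
Qed.

Lemma cassinian_ratio_le p : in_bdH2 p -> cassinian_ratio x y p <= dist2 x y / sqrt (snd x * snd y).
Proof.
  intros Hp. apply Rdiv_sqrt_le_compat; [apply sqrt_pos | | apply dist2_prod_bdH2_ge; assumption].
  apply Rmult_lt_0_compat; assumption.
Qed.

Lemma cassinian_ratio_nonneg p : in_bdH2 p -> 0 <= cassinian_ratio x y p.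
Proof.
  intros Hp. unfold cassinian_ratio, Rdiv. apply Rmult_le_pos; [apply sqrt_pos |].
  left. apply Rinv_0_lt_compat, sqrt_lt_R0.
  eapply Rlt_le_trans; [| apply dist2_prod_bdH2_ge; assumption].
  apply Rmult_lt_0_compat; assumption.
Qed.

Lemma cassinian_set_lub : is_lub (cassinian_set x y) (Rsup (cassinian_set x y)).
Proof.
  apply Rsup_is_lub.
  - exists (cassinian_ratio x y (0, 0)), (0, 0). split; reflexivity.
  - exists (dist2 x y / sqrt (snd x * snd y)). intros r [p [Hp ->]].
    apply cassinian_ratio_le; assumption.
Qed.

Lemma tau_H2_ge p c : in_bdH2 p -> 0 <= c -> c <= cassinian_ratio x y p -> ln (1 + c) <= tau_H2 x y.
Proof.
  intros Hp Hc Hcp. change (ln (1 + c) <= ln (1 + Rsup (cassinian_set x y))).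
  apply ln_le_compat; [lra |]. apply Rplus_le_compat_l.
  eapply Rle_trans; [exact Hcp |]. apply (proj1 cassinian_set_lub). exists p. split; auto.
Qed.

Lemma tau_H2_le B : (forall p, in_bdH2 p -> cassinian_ratio x y p <= B) -> tau_H2 x y <= ln (1 + B).
Proof.
  intros HB. destruct cassinian_set_lub as [Hub Hleast].
  assert (Hp0 : in_bdH2 (0, 0)) by reflexivity.
  assert (Hsup : 0 <= Rsup (cassinian_set x y)).
  { eapply Rle_trans; [apply (cassinian_ratio_nonneg _ Hp0) |].
    apply Hub. exists (0, 0). split; auto. }
  change (ln (1 + Rsup (cassinian_set x y)) <= ln (1 + B)).
  apply ln_le_compat; [lra |]. apply Rplus_le_compat_l.
  apply Hleast. intros r [p [Hp ->]]. apply HB; assumption.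
Qed.

Lemma cassinian_ratio_ge_of_prod_sq_le p e : in_bdH2 p -> 0 <= e ->
  (dist2 x p * dist2 y p) ^ 2 <= e ^ 2 -> dist2 x y / sqrt e <= cassinian_ratio x y p.
Proof.
  intros Hp He Hprod. apply Rdiv_sqrt_le_compat; [apply sqrt_pos | | apply pow2_le_reg; assumption].
  eapply Rlt_le_trans; [| apply dist2_prod_bdH2_ge; assumption].
  apply Rmult_lt_0_compat; assumption.
Qed.

Lemma cassinian_ratio_le_of_prod_sq_ge p e : 0 < e ->
  e ^ 2 <= (dist2 x p * dist2 y p) ^ 2 -> cassinian_ratio x y p <= dist2 x y / sqrt e.
Proof.
  intros He Hprod. apply Rdiv_sqrt_le_compat; [apply sqrt_pos | assumption |].
  apply pow2_le_reg; [| assumption].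
  apply Rmult_le_pos; apply sqrt_pos.
Qed.

Let m := midpt x y.
Let t := dist2 x y.

Lemma midpt_snd_pos : 0 < snd m.
Proof. unfold m, midpt, inH2 in *; simpl. lra. Qed.

Lemma dist2_sq_coords : (fst x - fst y) ^ 2 + (snd x - snd y) ^ 2 = t ^ 2.
Proof. symmetry. apply dist2_sq. Qed.

Lemma tau_H2_ge_far : 2 * snd m < t -> ln (1 + sqrt (t / snd m)) <= tau_H2 x y.
Proof.
  intros Hfar. pose proof midpt_snd_pos as Hd.
  assert (Hb : (snd x - snd y) ^ 2 <= 4 * snd m ^ 2).
  { unfold m, midpt, inH2 in *; simpl. nra. }
  destruct (prod_sq_le_far (fst x - fst y) (snd x - snd y) (snd m) t)
    as [s Hs]; [lra | apply dist2_sq_coords | assumption | nra |].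
  apply (tau_H2_ge (fst m - s, 0)); [reflexivity | apply sqrt_pos |].
  rewrite sqrt_div_as_ratio by lra.
  apply cassinian_ratio_ge_of_prod_sq_le; [reflexivity | nra |].
  unfold m. rewrite dist2_bdH2_prod_sq. fold m. fold t. nra.
Qed.

Lemma tau_H2_ge_centre : ln (1 + 2 * t / sqrt (4 * snd m ^ 2 + t ^ 2)) <= tau_H2 x y.
Proof.
  pose proof midpt_snd_pos as Hd.
  assert (He : 0 < 4 * snd m ^ 2 + t ^ 2) by nra.
  apply (tau_H2_ge (fst m - 0, 0)); [reflexivity | |].
  - unfold Rdiv. apply Rmult_le_pos; [apply Rmult_le_pos; [lra | apply sqrt_pos] |].
    left. apply Rinv_0_lt_compat, sqrt_lt_R0. assumption.
  - rewrite double_div_sqrt by assumption.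
    apply cassinian_ratio_ge_of_prod_sq_le; [reflexivity | lra |].
    unfold m. rewrite dist2_bdH2_prod_sq. fold m. fold t.
    apply prod_sq_le_at_centre, dist2_sq_coords.
Qed.

Lemma tau_H2_le_near : t < 2 * snd m -> tau_H2 x y <= ln (1 + 2 * t / sqrt (4 * snd m ^ 2 - t ^ 2)).
Proof.
  intros Hnear. pose proof midpt_snd_pos as Hd.
  assert (Ht : 0 <= t) by apply sqrt_pos.
  assert (He : 0 < 4 * snd m ^ 2 - t ^ 2) by nra.
  apply tau_H2_le. intros [q z] Hp. unfold in_bdH2 in Hp; simpl in Hp; subst z.
  rewrite double_div_sqrt by assumption.
  apply cassinian_ratio_le_of_prod_sq_ge; [lra |].
  replace q with (fst m - (fst m - q)) by ring.
  unfold m. rewrite dist2_bdH2_prod_sq. fold m. fold t.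
  apply prod_sq_ge_near. nra.
Qed.

End Cassinian_H2.

Theorem theorem3p12 (x y : pt) (hx : inH2 x) (hy : inH2 y) :
  let d := d_bdH2 (midpt x y) in
  let t := dist2 x y in
  (t > 2 * d -> tau_H2 x y >= ln (1 + sqrt (t / d))) /\
  (t <= 2 * d -> tau_H2 x y >= ln (1 + 2 * t / sqrt (4 * d ^ 2 + t ^ 2))) /\
  (t < 2 * d -> tau_H2 x y <= ln (1 + 2 * t / sqrt (4 * d ^ 2 - t ^ 2))).
Proof.
  intros d t.
  assert (Hd : d = snd (midpt x y)).
  { apply Rabs_right. left. apply midpt_snd_pos; assumption. }
  rewrite Hd. split; [| split]; intros Hcase.
  - apply Rle_ge, tau_H2_ge_far; assumption.
  - apply Rle_ge, tau_H2_ge_centre; assumption.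
  - apply tau_H2_le_near; assumption.
Qed.
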